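(* Let $L$ be a finite lattice and $\varphi\in M_1(L)$. Then $\lambda(\varphi;a,b)=B_\varphi(\langle a,b\rangle^* )$ for every pair $\{a,b\}$ of elements of $L$.
   Context: $L$ is a finite lattice with join $\vee$ and meet $\wedge$. $M_1(L)$ is the set of nonnegative monotone real functions on $L$. A path from $a$ to $b$ is a sequence $H=(h_0,\dots,h_m)$ of distinct elements of $L$ with $h_0=a$, $h_m=b$ ($m\ge 0$); $\varphi(H)=\sum_{i=0}^m\varphi(h_i)-\sum_{i=1}^m\varphi(h_{i-1}\vee h_i)$, and $\lambda(\varphi;a,b)=\max\{\varphi(H):H\text{ a path from }a\text{ to }b\}$. For $A\subseteq L$, $\langle A\rangle^*=\{x:x\ge a\text{ for some }a\in A\}$; $\langle a,b\rangle^*=\langle\{a,b\}\rangle^*$, $\langle x\rangle^*=\langle\{x\}\rangle^*$. $\mathcal L$ is the set of nonempty up-sets of $L$ ordered by $U\preceq V$ iff $U\supseteq V$ (meet = union). $M_\infty(\mathcal L)$ is the set of nonnegative completely monotone functions on $(\mathcal L,\preceq)$ (all iterated differences $\nabla_U\Phi(W)=\Phi(W)-\Phi(W\wedge U)$ nonnegative). $B_\varphi(U)=\min\{\Phi(U):\Phi\in M_\infty(\mathcal L),\ \Phi(\langle x\rangle^* )=\varphi(x)\ \forall x\in L\}$. *)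

From HB Require Import structures.
From mathcomp Require Import all_boot all_order all_algebra.
From mathcomp Require Import reals.
Set Implicit Arguments. Unset Strict Implicit. Unset Printing Implicit Defensive.
Import Order.TTheory GRing.Theory Num.Theory.
Local Open Scope ring_scope.

Section Defs.
Variables (d : Order.disp_t) (L : finLatticeType d) (R : realType).

Definition in_M1 (phi : L -> R) : Prop :=
  (forall x, 0 <= phi x) /\ (forall x y, (x <= y)%O -> phi x <= phi y).

Definition is_path (a b : L) (H : seq L) : Prop :=
  [/\ uniq H, head a H = a, last a H = b & H != [::]].

Definition path_value (phi : L -> R) (H : seq L) : R :=
  \sum_(h <- H) phi h
  - \sum_(p <- zip H (behead H)) phi (Order.join p.1 p.2).

Definition is_lambda (phi : L -> R) (a b : L) (v : R) : Prop :=
  (exists2 H, is_path a b H & path_value phi H = v) /\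
  (forall H, is_path a b H -> path_value phi H <= v).

Definition is_upset (U : {set L}) : bool :=
  (U != set0) && [forall x, forall y, (x \in U) && (x <= y)%O ==> (y \in U)].

Definition upcl (A : {set L}) : {set L} :=
  [set y | [exists x, (x \in A) && (x <= y)%O]].

(* Iterated differences on (\mathcal L, \preceq), where the meet is the union:
   nabla_U Phi(W) = Phi(W) - Phi(W \/ U);
   iter_nabla [:: U1; ...; Uk] Phi W = nabla_{U1} ... nabla_{Uk} Phi (W). *)
Fixpoint iter_nabla (Us : seq {set L}) (Phi : {set L} -> R) (W : {set L}) : R :=
  match Us with
  | [::] => Phi W
  | U :: Us' => iter_nabla Us' Phi W - iter_nabla Us' Phi (W :|: U)
  end.

(* M_infty(\mathcal L): nonnegative completely monotone functions on the
   nonempty up-sets (values of Phi outside \mathcal L are irrelevant). *)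
Definition completely_monotone (Phi : {set L} -> R) : Prop :=
  forall (Us : seq {set L}) (W : {set L}),
    all is_upset Us -> is_upset W -> 0 <= iter_nabla Us Phi W.

Definition extends (phi : L -> R) (Phi : {set L} -> R) : Prop :=
  completely_monotone Phi /\ forall x, Phi (upcl [set x]) = phi x.

Definition is_Bphi (phi : L -> R) (U : {set L}) (v : R) : Prop :=
  (exists2 Phi, extends phi Phi & Phi U = v) /\
  (forall Phi, extends phi Phi -> v <= Phi U).

End Defs.

From HB Require Import structures.
From mathcomp Require Import all_boot all_order all_algebra.
From mathcomp Require Import reals.
From mathcomp Require Import lra.
Import Order.TTheory GRing.Theory Num.Theory.
Set Implicit Arguments. Unset Strict Implicit. Unset Printing Implicit Defensive.
Local Open Scope ring_scope.

(* Every path H from a to b has value at most Phi(<a,b>^* ) for any completely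
   monotone extension Phi of phi: peeling off the first vertex h of H costs
   phi h - phi (h \/ h'), which a second-order difference of Phi bounds by the
   corresponding increment of Phi.  Conversely, g := lambda(phi; a, .) and
   phi - g are nonnegative and monotone, so the sum of their min-extensions
   W |-> min_{x in W} g x + min_{x in W} (phi x - g x) is completely monotone,
   extends phi, and takes the value g b at <a,b>^*. *)

Lemma maxr0_subr_min (R : realDomainType) (c u m : R) :
  Num.max 0 (c - m) - Num.max 0 (Num.min c u - m) = Num.max 0 (c - Num.max u m).
Proof.
rewrite !maxEle minEle.
by case: (leP c u); case: (leP u m); case: (leP 0 (c - m));
  try case: (leP 0 (c - u)); try case: (leP 0 (u - m)); lra.
Qed.

Section UpSets.
Variables (d : Order.disp_t) (L : finLatticeType d).

Lemma in_upcl1 (x z : L) : (z \in upcl [set x]) = (x <= z)%O.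
Proof.
rewrite inE; apply/existsP/idP => [[y /andP[]]|xz]; first by rewrite inE => /eqP->.
by exists x; rewrite inE eqxx.
Qed.

Lemma upcl1_is_upset (x : L) : is_upset (upcl [set x]).
Proof.
apply/andP; split; first by apply/set0Pn; exists x; rewrite in_upcl1.
apply/forallP => y; apply/forallP => z; apply/implyP => /andP[].
by rewrite !in_upcl1; apply: le_trans.
Qed.

Lemma is_upsetU (W U : {set L}) : is_upset W -> is_upset U -> is_upset (W :|: U).
Proof.
move=> /andP[/set0Pn[w wW] /forallP upW] /andP[_ /forallP upU].
apply/andP; split; first by apply/set0Pn; exists w; rewrite inE wW.
apply/forallP => y; apply/forallP => z; apply/implyP => /andP[].
rewrite !inE => /orP[yW|yU] yz.
- by move/forallP/(_ z)/implyP: (upW y) => ->; rewrite ?yW ?yz.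
- by move/forallP/(_ z)/implyP: (upU y) => ->; rewrite ?yU ?yz ?orbT.
Qed.

Lemma upcl1_sub (x y : L) : (x <= y)%O -> upcl [set y] \subset upcl [set x].
Proof. by move=> xy; apply/subsetP => z; rewrite !in_upcl1; apply: le_trans. Qed.

Lemma upcl2 (a b : L) : upcl [set a; b] = upcl [set a] :|: upcl [set b].
Proof.
apply/setP => z; rewrite in_setU !in_upcl1 inE.
apply/existsP/orP => [[y /andP[]]|[az|bz]].
- by rewrite !inE => /orP[]/eqP-> ->; [left|right].
- by exists a; rewrite !inE eqxx az.
- by exists b; rewrite !inE eqxx bz orbT.
Qed.

End UpSets.

Section Paths.
Variables (d : Order.disp_t) (L : finLatticeType d) (R : realType) (phi : L -> R).

Lemma path_value1 (h : L) : path_value phi [:: h] = phi h.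
Proof. by rewrite /path_value /= big_seq1 big_nil subr0. Qed.

Lemma path_value_cons (x y : L) s :
  path_value phi [:: x, y & s] = phi x - phi (Order.join x y) + path_value phi (y :: s).
Proof. by rewrite /path_value /= !big_cons /=; lra. Qed.

Lemma path_value_cat s (y : L) t :
  path_value phi (s ++ y :: t)
  = path_value phi (rcons s y) + path_value phi (y :: t) - phi y.
Proof.
elim: s => [|z [|w s] IH] /=; first by rewrite path_value1; lra.
  by rewrite !path_value_cons path_value1; lra.
by rewrite path_value_cons IH /= path_value_cons; lra.
Qed.

Lemma path_value_rcons (h : L) t y :
  path_value phi (rcons (h :: t) y)
  = path_value phi (h :: t) + phi y - phi (Order.join (last h t) y).
Proof.
elim: t h => [|w t IH] h /=; first by rewrite path_value_cons !path_value1; lra.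
by rewrite path_value_cons IH path_value_cons; lra.
Qed.

Definition is_pathb (a b : L) H := [&& uniq H, head a H == a, last a H == b & H != [::]].

Lemma is_pathP (a b : L) H : reflect (is_path a b H) (is_pathb a b H).
Proof.
apply: (iffP and4P) => [[? /eqP ? /eqP ? ?]|[? ? ? ?]]; first by split.
by split=> //; apply/eqP.
Qed.

Lemma is_path_cons (a b : L) H : is_path a b H -> exists2 t, H = a :: t & last a t = b.
Proof. by case: H => [|h t] [] //= _ -> <-; exists t. Qed.

Lemma undup_is_path (a b : L) : is_path a b (undup [:: a; b]).
Proof.
case: (eqVneq a b) => [<-|ab] /=; rewrite !inE ?eqxx ?(negbTE ab).
  by split.
by split; rewrite //= inE andbT.
Qed.

End Paths.

Section CompletelyMonotone.
Variables (d : Order.disp_t) (L : finLatticeType d) (R : realType).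
Implicit Types (Phi : {set L} -> R) (W U : {set L}).

Lemma iter_nablaD (Phi1 Phi2 : {set L} -> R) Us W :
  iter_nabla Us (fun X => Phi1 X + Phi2 X) W
  = iter_nabla Us Phi1 W + iter_nabla Us Phi2 W.
Proof. by elim: Us W => [|U Us IH] W //=; rewrite !IH; lra. Qed.

Lemma completely_monotoneD (Phi1 Phi2 : {set L} -> R) :
  completely_monotone Phi1 -> completely_monotone Phi2 ->
  completely_monotone (fun X => Phi1 X + Phi2 X).
Proof. by move=> cm1 cm2 Us W uUs uW; rewrite iter_nablaD addr_ge0 ?cm1 ?cm2. Qed.

Lemma iter_nabla_min Phi : (forall W, 0 <= Phi W) ->
  (forall W U, Phi (W :|: U) = Num.min (Phi W) (Phi U)) ->
  forall Us W, iter_nabla Us Phi W = Num.max 0 (Phi W - \big[Num.max/0]_(U <- Us) Phi U).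
Proof.
move=> Phi0 PhiU; elim=> [|U Us IH] W /=.
  by rewrite big_nil subr0 max_r ?Phi0.
by rewrite !IH big_cons PhiU maxr0_subr_min.
Qed.

Lemma completely_monotone_min Phi : (forall W, 0 <= Phi W) ->
  (forall W U, Phi (W :|: U) = Num.min (Phi W) (Phi U)) -> completely_monotone Phi.
Proof. by move=> Phi0 PhiU Us W _ _; rewrite iter_nabla_min // le_max lexx. Qed.

Variable Phi : {set L} -> R.
Hypothesis cmPhi : completely_monotone Phi.

Lemma completely_monotone_leU W U : is_upset W -> is_upset U -> Phi (W :|: U) <= Phi W.
Proof. by move=> uW uU; have /= := @cmPhi [:: U] W; rewrite uW uU subr_ge0; apply. Qed.

Lemma completely_monotone_supermodular W U1 U2 :
  is_upset W -> is_upset U1 -> is_upset U2 ->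
  Phi (W :|: U1) + Phi (W :|: U2) <= Phi W + Phi (W :|: U1 :|: U2).
Proof.
by move=> uW uU1 uU2; have /= := @cmPhi [:: U1; U2] W; rewrite uW uU1 uU2 /=; lra.
Qed.

End CompletelyMonotone.

Section MinExtension.
Variables (d : Order.disp_t) (L : finLatticeType d) (R : realType).
Implicit Types (f : L -> R) (W U : {set L}).

(* The unit [\max_x f x] bounds [f] from above, so it is invisible on nonempty
   sets and makes [min_ext f] nonnegative when [f] is. *)
Definition min_ext f W : R := \big[Num.min/(\big[Num.max/0]_y f y)]_(x in W) f x.

Lemma min_extU f W U : min_ext f (W :|: U) = Num.min (min_ext f W) (min_ext f U).
Proof. exact: bigminU. Qed.

Lemma min_ext_ge0 f W : (forall x, 0 <= f x) -> 0 <= min_ext f W.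
Proof. by move=> f0; apply/bigmin_geP; split=> [|x _]; rewrite ?bigmax_ge_id. Qed.

Lemma min_ext_upcl1 f x : (forall y z, (y <= z)%O -> f y <= f z) ->
  min_ext f (upcl [set x]) = f x.
Proof.
move=> fhomo; apply/le_anti; rewrite bigmin_le_cond ?in_upcl1 //=.
apply/bigmin_geP; split=> [|y]; first exact: le_bigmax.
by rewrite in_upcl1; apply: fhomo.
Qed.

Lemma min_ext_extends f : in_M1 f -> extends f (min_ext f).
Proof.
case=> f0 fhomo; split=> [|x]; last exact: min_ext_upcl1.
by apply: completely_monotone_min => [W|]; [apply: min_ext_ge0 | apply: min_extU].
Qed.

End MinExtension.

Section Lambda.
Variables (d : Order.disp_t) (L : finLatticeType d) (R : realType) (phi : L -> R).

Lemma path_value_le_ext Phi : extends phi Phi ->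
  forall h t, path_value phi (h :: t) <= Phi (upcl [set h] :|: upcl [set last h t]).
Proof.
case=> cmPhi Phi1 h t; elim: t h => [|h' t IH] h.
  by rewrite path_value1 /= setUid Phi1.
rewrite path_value_cons /=.
set J := upcl [set Order.join h h']; set P := upcl [set last h' t].
have JR : J :|: upcl [set h] = upcl [set h] by apply/setUidPr/upcl1_sub/leUl.
have JQ : J :|: upcl [set h'] = upcl [set h'] by apply/setUidPr/upcl1_sub/leUr.
have := completely_monotone_supermodular cmPhi
  (upcl1_is_upset (Order.join h h')) (upcl1_is_upset h) (upcl1_is_upset (last h' t)).
have := completely_monotone_leU cmPhi
  (is_upsetU (upcl1_is_upset (Order.join h h')) (upcl1_is_upset (last h' t)))
  (upcl1_is_upset h').
rewrite JR -setUA (setUC P) setUA JQ !Phi1.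
by have := IH h'; lra.
Qed.

(* Paths are duplicate-free, hence of length at most [#|L|]; [lambda] maximises
   over this finite type of sequences. *)
Definition short_seq := {n : 'I_#|L|.+1 & n.-tuple L}.

Lemma uniq_size_lt (s : seq L) : uniq s -> (size s < #|L|.+1)%N.
Proof. by move=> us; rewrite ltnS -(card_uniqP us) max_card. Qed.

Definition short_seq_of (s : seq L) (us : uniq s) : short_seq :=
  @Tagged _ (Ordinal (uniq_size_lt us)) (fun n => n.-tuple L) (in_tuple s).

Definition lambda (a b : L) : R :=
  path_value phi (tagged [arg max_(t > short_seq_of (undup_uniq [:: a; b])
                                  | is_pathb a b (tagged t)) path_value phi (tagged t)]%O).

Lemma lambdaP a b : is_lambda phi a b (lambda a b).
Proof.
rewrite /lambda; case: arg_maxP => [|t /is_pathP pt tmax].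
  by apply/is_pathP; apply: undup_is_path.
split=> [|H pH]; first by exists (tagged t).
have [uH _ _ _] := pH; apply: (tmax (short_seq_of uH)).
exact/is_pathP.
Qed.

Lemma lambda_le_ext a b Phi : extends phi Phi -> lambda a b <= Phi (upcl [set a; b]).
Proof.
have [[H /is_path_cons[t -> <-] <-] _] := lambdaP a b.
by move=> extPhi; rewrite upcl2; apply: path_value_le_ext.
Qed.

End Lambda.

Section LambdaProfile.
Variables (d : Order.disp_t) (L : finLatticeType d) (R : realType).
Variables (phi : L -> R) (a : L).
Hypothesis phiM1 : in_M1 phi.

Local Notation g := (lambda phi a).

Lemma path_value_le_min h t :
  path_value phi (h :: t) <= Num.min (phi h) (phi (last h t)).
Proof.
have := path_value_le_ext (min_ext_extends phiM1) h t.
by rewrite min_extU !min_ext_upcl1 //; case: phiM1.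
Qed.

Lemma lambda_le_min x : g x <= Num.min (phi a) (phi x).
Proof.
have [[H /is_path_cons[t -> <-] <-] _] := lambdaP phi a x.
exact: path_value_le_min.
Qed.

Lemma lambda_id : g a = phi a.
Proof.
apply/le_anti; rewrite (le_trans (lambda_le_min a)) ?ge_min ?lexx //=.
by rewrite -(path_value1 phi a); apply: (lambdaP phi a a).2.
Qed.

(* Either a best path to x passes through y, and cutting it there leaves a tail
   of value at most phi (x \/ y), or it can be extended by y. *)
Lemma lambda_join x y : g x + phi y - phi (Order.join x y) <= g y.
Proof.
have [[H [uH hH lH nH] <-] _] := lambdaP phi a x.
have lambda_y := (lambdaP phi a y).2.
have [yH|yNH] := boolP (y \in H).
- move: uH hH lH nH; case/splitPr: yH => H1 H2 uH hH lH _.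
  have /lambda_y : is_path a y (rcons H1 y).
    split; rewrite ?last_rcons //.
    - by move: uH; rewrite -cat_rcons cat_uniq => /andP[].
    - by case: H1 hH {uH lH}.
    - by case: H1 {uH hH lH}.
  have : path_value phi (y :: H2) <= phi (Order.join x y).
    rewrite last_cat /= in lH.
    apply: le_trans (path_value_le_min _ _) _.
    by rewrite lH ge_min (phiM1.2 _ _ (leUl x y)) orbT.
  by rewrite path_value_cat; lra.
- have /is_path_cons[t eH lt] : is_path a x H by [].
  move: yNH uH; rewrite eH => yNH uH.
  have /lambda_y : is_path a y (rcons (a :: t) y).
    by split; rewrite ?last_rcons // rcons_uniq yNH.
  by rewrite path_value_rcons lt; lra.
Qed.

Lemma lambda_in_M1 : in_M1 g.
Proof.
have homo y z : (y <= z)%O -> g y <= g z.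
  by move=> yz; have := lambda_join y z; rewrite join_r //; lra.
split=> // x; have := lambda_join a (Order.meet a x).
rewrite join_l ?leIl // lambda_id addrAC subrr add0r => meet_le.
apply: le_trans (homo _ _ (leIr x a)).
exact: le_trans (phiM1.1 _) meet_le.
Qed.

Lemma lambda_compl_in_M1 : in_M1 (fun x => phi x - g x).
Proof.
split=> [x|y z yz]; first by have := lambda_le_min x; rewrite le_min subr_ge0 => /andP[].
by have := lambda_join z y; rewrite join_l //; lra.
Qed.

Lemma lambda_attained b :
  exists2 Phi, extends phi Phi & Phi (upcl [set a; b]) = g b.
Proof.
have [cmG G1] := min_ext_extends lambda_in_M1.
have [cmH H1] := min_ext_extends lambda_compl_in_M1.
exists (fun W => min_ext g W + min_ext (fun x => phi x - g x) W).
  split=> [|x]; first exact: completely_monotoneD.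
  by rewrite G1 H1; lra.
rewrite upcl2 !min_extU G1 G1 H1 H1 lambda_id subrr.
have := lambda_le_min b; rewrite le_min => /andP[ba bb].
by rewrite min_r // min_l ?subr_ge0 //; lra.
Qed.

End LambdaProfile.

Theorem proposition3p12 (d : Order.disp_t) (L : finLatticeType d) (R : realType)
  (phi : L -> R) (hphi : in_M1 phi) (a b : L) :
  exists v : R, is_lambda phi a b v /\ is_Bphi phi (upcl [set a; b]) v.
Proof.
exists (lambda phi a b); split; first exact: lambdaP.
by split=> [|Phi]; [apply: lambda_attained | apply: lambda_le_ext].
Qed.
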